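(* Let $X$ be a nonnegative random variable and $\nu\ge1$. Suppose there exist constants $\Theta_1>0$ and $\Theta_2>0$ such that $\mathbb EX^p\le[p^{\nu p}+\Theta_2^{\nu p}]\Theta_1^{2p}$ for all integers $p\ge1$. Then for every $\vartheta>0$, $$\mathbb P(X>\vartheta)\le3\exp[\Theta_2/(2e)]\exp\Big[-\frac{\vartheta^{1/\nu}}{2e\Theta_1^{2/\nu}}\Big].$$ *)

From HB Require Import structures.
From mathcomp Require Import all_boot all_order all_algebra.
From mathcomp Require Import all_classical all_reals all_analysis.

From HB Require Import structures.
From mathcomp Require Import all_boot all_order all_algebra.
From mathcomp Require Import all_classical all_reals all_analysis.
From mathcomp Require Import measurable_realfun ring lra.
Import Order.TTheory GRing.Theory Num.Theory.
Local Open Scope classical_set_scope.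
Local Open Scope ring_scope.

(* Write theta = t^nu Th1^2, i.e. t = theta^(1/nu) / Th1^(2/nu).  Markov's
   inequality for X^p and the moment hypothesis give
   P(X > theta) <= (p/t)^(nu p) + (Th2/t)^(nu p).  Choosing
   p = floor(t/(2e)) + 1 makes p <= t/e as soon as t >= 2e, so the first term is
   at most e^-p <= exp(-t/(2e)); when Th2 < t the second is at most
   exp(p (Th2/t - 1)) <= exp((Th2 - t)/(2e)).  If t <= Th2 or t <= 2e, the
   right-hand side is at least 3/e >= 1. *)

Section real_bounds.
Context {R : realType}.
Implicit Types a p q r t x y : R.

Lemma ln_le_subr1 x : 0 < x -> ln x <= x - 1.
Proof.
by move=> x0; have := @le_ln1Dx R (x - 1); rewrite subrKC; apply; lra.
Qed.

Lemma invr3_le_expRN1 : 3^-1 <= expR (-1) :> R.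
Proof.
have -> : expR (-1) = expR (- 6^-1) ^+ 6 :> R.
  by rewrite -expRM_natl; congr expR; field.
have h : 5 / 6 <= expR (- 6^-1) :> R by have := @expR_ge1Dx R (- 6^-1); lra.
apply: le_trans (lerXn2r 6 _ _ h); rewrite ?nnegrE ?expR_ge0 //.
by rewrite !exprS expr0; lra.
Qed.

Lemma one_le_3expR x : -1 <= x -> 1 <= 3 * expR x.
Proof.
by move=> x_ge; have := invr3_le_expRN1; rewrite -ler_expR in x_ge; lra.
Qed.

Lemma powR_div x y r : 0 < x -> 0 < y -> (x / y) `^ r = x `^ r / y `^ r.
Proof.
by move=> x0 y0; rewrite /powR !gt_eqF ?divr_gt0 // ln_div ?posrE // mulrBr expRB.
Qed.

Lemma powR_divK x t r : 0 <= x -> 0 < t -> (x / t) `^ r * t `^ r = x `^ r.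
Proof. by move=> x0 t0; rewrite -powRM ?divfK ?gt_eqF ?divr_ge0 // ltW. Qed.

Lemma powR_le_expR x r q : 0 < x <= 1 -> 0 <= q -> 1 <= r ->
  x `^ (r * q) <= expR (q * ln x).
Proof.
move=> /andP[x0 x1] q0 r1; rewrite /powR gt_eqF // ler_expR.
by rewrite ler_wnM2r ?ln_le0 // ler_peMl.
Qed.

Lemma powR_ratio_le_expRN p t r : 0 < t -> 0 < p <= expR (-1) * t -> 1 <= r ->
  (p / t) `^ (r * p) <= expR (- p).
Proof.
move=> t0 /andP[p0 p_le] r1.
have pt_le : p / t <= expR (-1) by rewrite ler_pdivrMr.
apply: (le_trans (powR_le_expR _ _ _ _ (ltW p0) r1)).
  by rewrite divr_gt0 //= (le_trans pt_le) // expR_le1 lerN10.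
rewrite ler_expR -mulrN1 ler_pM2l //.
by rewrite -[leRHS]expRK ler_ln ?posrE ?divr_gt0 ?expR_gt0.
Qed.

Lemma powR_ratio_le_expR a t r q : 0 < a <= t -> 0 <= q -> 1 <= r ->
  (a / t) `^ (r * q) <= expR (q * (a / t - 1)).
Proof.
move=> /andP[a0 a_le] q0 r1; have t0 : 0 < t by apply: lt_le_trans a_le.
apply: (le_trans (powR_le_expR _ _ _ _ q0 r1)).
  by rewrite divr_gt0 // ler_pdivrMr ?mul1r.
by rewrite ler_expR ler_wpM2l // ln_le_subr1 // divr_gt0.
Qed.

Lemma moment_ratios_le a nu t (p : nat) : 0 < a < t -> 1 <= nu ->
  2 * expR 1 <= t -> t / (2 * expR 1) < p%:R <= t / (2 * expR 1) + 1 ->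
  (p%:R / t) `^ (nu * p%:R) + (a / t) `^ (nu * p%:R)
    <= 2 * expR ((a - t) / (2 * expR 1)).
Proof.
move=> /andP[a0 a_lt] nu1 t_ge /andP[p_gt p_le].
have e0 : 0 < 2 * expR 1 :> R by rewrite mulr_gt0 ?expR_gt0.
have t0 : 0 < t by apply: lt_le_trans t_ge.
have p0 : 0 < p%:R :> R by apply: le_lt_trans p_gt; rewrite divr_ge0 ?ltW.
have u_ge1 : 1 <= t / (2 * expR 1) by rewrite ler_pdivlMr // mul1r.
have u_gt0 : 0 < a / (2 * expR 1) by rewrite divr_gt0.
have p_term : (p%:R / t) `^ (nu * p%:R) <= expR (- (t / (2 * expR 1))).
  apply: le_trans (powR_ratio_le_expRN _ _ _ t0 _ nu1) _.
    rewrite p0 /= (_ : expR (-1) * t = 2 * (t / (2 * expR 1))); first lra.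
    by rewrite expRN; field; rewrite gt_eqF ?expR_gt0.
  by rewrite ler_expR lerN2 ltW.
have a_term : (a / t) `^ (nu * p%:R) <= expR ((a - t) / (2 * expR 1)).
  apply: le_trans (powR_ratio_le_expR _ _ _ _ _ (ltW p0) nu1) _.
    by rewrite a0 ltW.
  rewrite ler_expR; apply: le_trans (ler_wnM2r _ (ltW p_gt)) _.
    by rewrite subr_le0 ler_pdivrMr ?mul1r ?ltW.
  suff -> : t / (2 * expR 1) * (a / t - 1) = (a - t) / (2 * expR 1) by [].
  by field; rewrite !gt_eqF.
have : expR (- (t / (2 * expR 1))) <= expR ((a - t) / (2 * expR 1)).
  by rewrite ler_expR mulrBl; lra.
lra.
Qed.

Lemma powR_root_divK x c nu : 0 < x -> 0 < c -> nu != 0 ->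
  (x `^ nu^-1 / c `^ (2 / nu)) `^ nu * c ^+ 2 = x.
Proof.
move=> x0 c0 nu0; rewrite powR_div ?powR_gt0 // -!powRrM !mulVf // divfK //.
by rewrite powRr1 ?ltW // powR_mulrn ?ltW // divfK // gt_eqF // exprn_gt0.
Qed.

Lemma moment_bound_le a c nu t (p : nat) : 0 < a < t -> 0 < c -> 1 <= nu ->
  2 * expR 1 <= t -> t / (2 * expR 1) < p%:R <= t / (2 * expR 1) + 1 ->
  (p%:R `^ (nu * p%:R) + a `^ (nu * p%:R)) * c ^+ (2 * p)
    <= (t `^ nu * c ^+ 2) ^+ p * (2 * expR ((a - t) / (2 * expR 1))).
Proof.
move=> /andP[a0 a_lt] c0 nu1 t_ge p_bounds.
have t0 : 0 < t := lt_trans a0 a_lt.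
rewrite -(powR_divK p%:R t _ (ler0n _ p) t0) -(powR_divK a t _ (ltW a0) t0).
rewrite exprMn -(powR_mulrn p (powR_ge0 t nu)) -powRrM -exprM -mulrDl -mulrA mulrC.
rewrite ler_pM2l ?mulr_gt0 ?powR_gt0 ?exprn_gt0 //.
by apply: moment_ratios_le; rewrite ?a0.
Qed.

End real_bounds.

Section markov_power.
Context {d} {T : measurableType d} {R : realType} {P : probability T R}.
Variable X : {RV P >-> R}.

Lemma measurable_RV_gt (theta : R) : measurable [set w | theta < X w].
Proof.
have -> : [set w | theta < X w] = X @^-1` `]theta, +oo[.
  by apply/seteqP; split => w /=; rewrite in_itv /= andbT.
exact: (measurable_funPTI X (measurable_itv _)).
Qed.

Lemma markov_exprn (theta : R) (p : nat) : (forall w, 0 <= X w) -> 0 < theta ->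
  ((theta ^+ p)%:E * P [set w | (theta < X w)%R] <=
   'E_P[fun w => (X w ^+ p)%R])%E.
Proof.
move=> X_ge0 theta_gt0.
have := markov X theta_gt0 (exprn_measurable p) (fun r => @exprn_ge0 _ p r)
  (fun x y x0 y0 => lerXn2r p x0 y0).
have -> : (fun x => x ^+ p) \o (fun x => `|x|) \o X = (fun w => X w ^+ p).
  by apply: funext => w /=; rewrite ger0_norm.
apply: le_trans; apply: lee_wpmul2l; first by rewrite lee_fin exprn_ge0 // ltW.
have -> : [set w | (theta%:E <= `|(X w)%:E|)%E] = X @^-1` `[theta, +oo[.
  by apply/seteqP; split => w /=; rewrite in_itv /= andbT ger0_norm.
apply: le_measure; rewrite ?inE.
- exact: measurable_RV_gt.
- exact: (measurable_funPTI X (measurable_itv _)).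
- by move=> w /=; rewrite in_itv /= andbT => /ltW.
Qed.

Lemma markov_exprn_le (theta b : R) (p : nat) : (forall w, 0 <= X w) ->
  0 < theta -> ('E_P[fun w => (X w ^+ p)%R] <= (theta ^+ p * b)%:E)%E ->
  (P [set w | (theta < X w)%R] <= b%:E)%E.
Proof.
move=> X_ge0 theta_gt0 moment_le.
have theta_p_gt0 : (0 < (theta ^+ p)%:E)%E by rewrite lte_fin exprn_gt0.
rewrite -(lee_pmul2l _ theta_p_gt0) // -EFinM.
exact: le_trans (markov_exprn theta p X_ge0 theta_gt0) moment_le.
Qed.

End markov_power.

Theorem corollaryB2 (d : measure_display) (T : measurableType d) (R : realType)
  (P : probability T R) (X : {RV P >-> R}) (nu Th1 Th2 : R) :
  (forall w, 0 <= X w) ->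
  1 <= nu -> 0 < Th1 -> 0 < Th2 ->
  (forall p : nat, (1 <= p)%N ->
     ('E_P[fun w => (X w ^+ p)%R] <=
      (((p%:R `^ (nu * p%:R)) + (Th2 `^ (nu * p%:R))) * Th1 ^+ (2 * p))%:E)%E) ->
  forall theta : R, 0 < theta ->
  (P [set w | (theta < X w)%R] <=
   (3 * expR (Th2 / (2 * expR 1))
      * expR (- (theta `^ (nu^-1) / (2 * expR 1 * Th1 `^ (2 / nu)))))%:E)%E.
Proof.
move=> X_ge0 nu_ge1 Th1_gt0 Th2_gt0 moments theta theta_gt0.
have two_e_gt0 : 0 < 2 * expR 1 :> R by rewrite mulr_gt0 ?expR_gt0.
set t := theta `^ nu^-1 / Th1 `^ (2 / nu).
have t_gt0 : 0 < t by rewrite divr_gt0 ?powR_gt0.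
have -> : 3 * expR (Th2 / (2 * expR 1))
            * expR (- (theta `^ nu^-1 / (2 * expR 1 * Th1 `^ (2 / nu))))
          = 3 * expR ((Th2 - t) / (2 * expR 1)).
  by rewrite -mulrA -expRD; congr (_ * expR _); rewrite /t; field; rewrite !gt_eqF ?powR_gt0.
have [/andP[Th2_lt_t two_e_lt_t] | t_small] := boolP ((Th2 < t) && (2 * expR 1 < t)).
  set p := (Num.truncn (t / (2 * expR 1))).+1.
  have p_bounds : t / (2 * expR 1) < p%:R <= t / (2 * expR 1) + 1.
    by rewrite truncnS_gt andTb /p -natr1 lerD2r truncn_le divr_ge0 ?ltW.
  apply: (markov_exprn_le X _ _ p X_ge0 theta_gt0).
  apply: le_trans (moments p isT) _; rewrite lee_fin.
  have nu_neq0 : nu != 0 by rewrite gt_eqF // (lt_le_trans ltr01).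
  rewrite -(powR_root_divK _ _ _ theta_gt0 Th1_gt0 nu_neq0) -/t.
  apply: le_trans (moment_bound_le _ _ _ _ _ _ Th1_gt0 nu_ge1 (ltW two_e_lt_t) p_bounds) _.
    by rewrite Th2_gt0.
  apply: ler_wpM2l; first exact: exprn_ge0 (mulr_ge0 (powR_ge0 _ _) (sqr_ge0 _)).
  by rewrite ler_pM2r ?expR_gt0 // ler_nat.
apply: le_trans (probability_le1 P (measurable_RV_gt X theta)) _.
rewrite lee_fin one_le_3expR // ler_pdivlMr //.
by move: t_small; rewrite negb_and -!leNgt => /orP[]; lra.
Qed.
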